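(* Let $\Omega$ be a Stone signature, $X$ a topological space, and let $\hat\iota:T_\Omega(X)\to\overline{\Omega}_X\mathcal{S}t_\Omega$ be the unique continuous homomorphism extending the natural generating mapping $\iota:X\to\overline{\Omega}_X\mathcal{S}t_\Omega$. Then $\mathcal B=\{\hat\iota^{-1}(K):K\text{ clopen in }\overline{\Omega}_X\mathcal{S}t_\Omega\}$ is the largest Boolean subalgebra of $\mathcal P_{co}(T_\Omega(X))$ satisfying condition $(\ast)$.
   Context: A Stone signature is $\Omega=\biguplus_n\Omega_n$ with each $\Omega_n$ a compact Hausdorff 0-dimensional space. A Stone topological $\Omega$-algebra is a compact Hausdorff 0-dimensional space $A$ with continuous evaluation maps $\Omega_n\times A^n\to A$; $\mathcal{S}t_\Omega$ is the class of all such. $\overline{\Omega}_X\mathcal{S}t_\Omega$ is the free Stone topological algebra over $X$: a Stone topological algebra with a continuous map $\iota$ from $X$ whose image generates a dense subalgebra, such that every continuous map from $X$ into a Stone topological $\Omega$-algebra factors uniquely through $\iota$ via a continuous homomorphism. $T_\Omega(X)$ is the term algebra on $X$ (finite ordered trees, leaves labeled in $X\uplus\Omega_0$, nodes with $k$ children labeled in $\Omega_k$), topologized as topological sum over tree shapes of products of label spaces, with evaluation maps $E_n:\Omega_n\times T_\Omega(X)^n\to T_\Omega(X)$. $\mathcal P_{co}(Y)$ is the Boolean algebra of clopen subsets of $Y$. Condition $(\ast)$ for a Boolean algebra $\mathcal B$ of subsets of $T_\Omega(X)$: for every $n$ and every $L\in\mathcal B$, $E_n^{-1}(L)$ lies in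 the Boolean subalgebra of subsets of $\Omega_n\times T_\Omega(X)^n$ generated by the sets $K\times L_1\times\cdots\times L_n$ with $K$ clopen in $\Omega_n$ and $L_i\in\mathcal B$. *)

From HB Require Import structures.
From mathcomp Require Import all_boot all_order all_algebra.
From mathcomp Require Import all_classical all_reals all_analysis.

Set Implicit Arguments.
Unset Strict Implicit.
Unset Printing Implicit Defensive.

Local Open Scope classical_set_scope.

Definition zero_dim (T : topologicalType) : Prop :=
  forall (x : T) (U : set T), nbhs x U ->
    exists V : set T, [/\ clopen V, V x & V `<=` U].

Definition stone_space (T : topologicalType) : Prop :=
  [/\ compact [set: T], hausdorff_space T & zero_dim T].

(* A Stone signature Omega = disjoint union of the Omega n, each Omega n a
   Stone space; it is represented by the family (Omega n)_n. *)
Definition stone_signature (Omega : nat -> topologicalType) : Prop :=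
  forall n, stone_space (Omega n).

Definition op_type (Omega : nat -> topologicalType) (A : Type) :=
  forall n, Omega n -> ('I_n -> A) -> A.

Definition stone_alg (Omega : nat -> topologicalType) (A : topologicalType)
    (ev : op_type Omega A) : Prop :=
  stone_space A /\
  forall n, continuous (fun p : (Omega n * {ptws 'I_n -> A})%type =>
                          ev n p.1 p.2).

Definition is_hom (Omega : nat -> topologicalType) (A B : Type)
    (evA : op_type Omega A) (evB : op_type Omega B) (h : A -> B) : Prop :=
  forall n (o : Omega n) (a : 'I_n -> A), h (evA n o a) = evB n o (h \o a).

Definition subalg_gen (Omega : nat -> topologicalType) (A : Type)
    (ev : op_type Omega A) (S : set A) : set A :=
  fun a => forall C : set A,
    S `<=` C ->
    (forall n (o : Omega n) (c : 'I_n -> A), (forall i, C (c i)) -> C (ev n o c)) ->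
    C a.

Definition is_free_stone_alg (Omega : nat -> topologicalType)
    (X : topologicalType) (F : topologicalType) (evF : op_type Omega F)
    (iota : X -> F) : Prop :=
  [/\ stone_alg evF,
      continuous iota,
      closure (subalg_gen evF (range iota)) = [set: F] &
      forall (B : topologicalType) (evB : op_type Omega B),
        stone_alg evB ->
        forall f : X -> B, continuous f ->
          exists! g : F -> B,
            [/\ continuous g, is_hom evF evB g & forall x, g (iota x) = f x]].

(* The term algebra T_Omega(X): finite ordered trees; leaves labelled in X
   (Var) or in Omega 0 (Op 0 o _), nodes with k children labelled in Omega k. *)
Inductive term (Omega : nat -> topologicalType) (X : Type) : Type :=
  | Var of X
  | Op (n : nat) of Omega n & ('I_n -> term Omega X).

Arguments Var {Omega X}.
Arguments Op {Omega X} n.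

Definition term_ev (Omega : nat -> topologicalType) (X : Type)
  : op_type Omega (term Omega X) := fun n o ts => Op n o ts.

(* Topology of T_Omega(X): the topological sum, over tree shapes, of the
   products of the label spaces. *)
Fixpoint term_box (Omega : nat -> topologicalType) (X : topologicalType)
    (t : term Omega X) : set (set (term Omega X)) :=
  match t with
  | Var x => fun N => exists V : set X,
      [/\ open V, V x & N = [set s | exists2 y, V y & s = Var y]]
  | Op n o f => fun N => exists (W : set (Omega n)) (Bs : 'I_n -> set (term Omega X)),
      [/\ open W, W o, (forall i, term_box (f i) (Bs i)) &
          N = [set s | exists o' g, [/\ s = Op n o' g, W o' & forall i, Bs i (g i)]]]
  end.

Definition term_open (Omega : nat -> topologicalType) (X : topologicalType)
    (U : set (term Omega X)) : Prop :=
  forall t, U t -> exists2 N, term_box t N & N `<=` U.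

Definition term_clopen (Omega : nat -> topologicalType) (X : topologicalType)
    (U : set (term Omega X)) : Prop :=
  term_open U /\ term_open (~` U).

Fixpoint term_eval (Omega : nat -> topologicalType) (X A : Type)
    (ev : op_type Omega A) (f : X -> A) (t : term Omega X) : A :=
  match t with
  | Var x => f x
  | Op n o ts => ev n o (fun i => term_eval ev f (ts i))
  end.

Definition is_bool_alg (T : Type) (B : set (set T)) : Prop :=
  [/\ B [set: T],
      (forall S, B S -> B (~` S)) &
      (forall S S', B S -> B S' -> B (S `|` S'))].

Definition bool_gen (T : Type) (G : set (set T)) : set (set T) :=
  fun S => forall C : set (set T), is_bool_alg C -> G `<=` C -> C S.

Definition clopen_bool_subalg (Omega : nat -> topologicalType) (X : topologicalType)
    (B : set (set (term Omega X))) : Prop :=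
  is_bool_alg B /\ B `<=` @term_clopen Omega X.

Definition cond_star (Omega : nat -> topologicalType) (X : topologicalType)
    (B : set (set (term Omega X))) : Prop :=
  forall n (L : set (term Omega X)), B L ->
    bool_gen
      [set R | exists (K : set (Omega n)) (Ls : 'I_n -> set (term Omega X)),
          [/\ clopen K, (forall i, B (Ls i)) &
              R = [set p | K p.1 /\ forall i, Ls i (p.2 i)]]]
      ((fun p : Omega n * ('I_n -> term Omega X) => term_ev p.1 p.2) @^-1` L).

From HB Require Import structures.
From mathcomp Require Import all_boot all_order all_algebra.
From mathcomp Require Import all_classical all_reals all_analysis.

(* Term evaluation [E] into the free algebra [F] is continuous, so [B0] is a
   Boolean algebra of clopen sets.  It satisfies [cond_star] because
   [E_n^-1 (E^-1 K)] is the preimage under [(o, ts) |-> (o, E o ts)] of the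
   clopen set [ev^-1 K] of the compact zero-dimensional space
   [Omega_n x F^n], and such a set is a finite union of clopen rectangles.
   Conversely, for [B] satisfying [cond_star], send a term [t] to its profile
   [L |-> (L \in B /\ t \in L)] in the Cantor cube [2^(set T)].  By
   [cond_star], the cube carries continuous operations making the profile
   map a homomorphism, so by freeness the profile map factors through [E];
   each [L] in [B] is then the preimage of a clopen set of [F]. *)

Local Open Scope classical_set_scope.

Lemma ptws_cvg {I : Type} {A : topologicalType} {F : set_system (I -> A)}
    {g : I -> A} :
  Filter F -> (forall i, (fun h => h i) @ F --> g i) ->
  F --> (g : {ptws I -> A}).
Proof.
move=> FF coord_cvg; apply/cvg_sup => i Q.
rewrite nbhsE => -[B [oB Bg] BQ].
case: oB Bg BQ => C oC <- Cg BQ.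
by apply: (filterS BQ); apply: (coord_cvg i); exact: open_nbhs_nbhs.
Qed.

Lemma continuous_ptws {Y : topologicalType} {I : Type} {A : topologicalType}
    {m : Y -> {ptws I -> A}} :
  (forall i, continuous (fun y => m y i)) -> continuous m.
Proof. by move=> cm y; apply: ptws_cvg => i; exact: cm. Qed.

Lemma nbhs_ptws_box {n} {A : topologicalType} {g : {ptws 'I_n -> A}}
    {Q : set {ptws 'I_n -> A}} :
  nbhs g Q -> exists U : 'I_n -> set A,
    (forall i, nbhs (g i) (U i)) /\ [set h | forall i, U i (h i)] `<=` Q.
Proof.
pose boxes := filter_from [set U : 'I_n -> set A | forall i, nbhs (g i) (U i)]
  (fun U => [set h : 'I_n -> A | forall i, U i (h i)]).
have boxes_filter : Filter boxes.
  apply: filter_from_filter.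
    by exists (fun _ => setT) => i; exact: filterT.
  move=> U V HU HV; exists (fun i => U i `&` V i).
    by move=> i; exact: filterI.
  by move=> h /= H; split => i; case: (H i).
have : boxes --> (g : {ptws 'I_n -> A}).
  apply: ptws_cvg => i C Ci.
  exists (fun j => if j == i then C else setT).
    by move=> j; case: eqP => [->|_] //; exact: filterT.
  by move=> h /= /(_ i); rewrite eqxx.
by move=> /(_ Q) H /H [U HU UQ]; exists U.
Qed.

Lemma clopen_asbool_continuous {Y : topologicalType} {C : set Y} :
  clopen C -> continuous (fun y => `[< C y >]).
Proof.
move=> [oC cC] y Q /= /nbhs_singleton Qy.
have [Cy|nCy] := pselect (C y).
  apply: filterS (open_nbhs_nbhs (conj oC Cy)) => z Cz /=.
  by rewrite asboolT // -(asboolT Cy).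
have oCC : open (~` C) by exact: closed_openC.
apply: filterS (open_nbhs_nbhs (conj oCC nCy)) => z nCz /=.
by rewrite asboolF // -(asboolF nCy).
Qed.

Lemma zero_dimensional_zero_dim {T : topologicalType} :
  compact [set: T] -> hausdorff_space T -> zero_dimensional T -> zero_dim T.
Proof.
move=> cT hT zT x U nU.
by have [D [Dx cD] DU] := zero_dimensional_cvg hT zT cT nU; exists D.
Qed.

Lemma stone_space_bool_ptws (I : choiceType) : stone_space {ptws I -> bool}.
Proof.
have compactT : compact [set: {ptws I -> bool}].
  have := @tychonoff _ (fun _ : I => bool) _ (fun=> bool_compact).
  by congr (compact _); rewrite eqEsubset.
have hausdorffT : hausdorff_space {ptws I -> bool}.
  by apply: hausdorff_product => ?; exact: discrete_hausdorff.
split => //; apply: zero_dimensional_zero_dim => //.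
by apply: zero_dimension_prod => _; exact: discrete_zero_dimension.
Qed.

Lemma clopen_ptws_bool_coord {I : choiceType} (i : I) :
  clopen [set u : {ptws I -> bool} | u i].
Proof.
apply: (@preimage_clopen _ _ (fun u : {ptws I -> bool} => u i) [set true]).
  by split; [exact: discrete_open | exact: discrete_closed].
exact: (@proj_continuous _ (fun=> bool) i).
Qed.

Definition rectangle {A C : Type} {n} (K : set A) (Ls : 'I_n -> set C) :
    set (A * ('I_n -> C)) :=
  [set p | K p.1 /\ forall i, Ls i (p.2 i)].

Definition rectangles {A C : Type} n (KA : set (set A)) (LC : set (set C)) :
    set (set (A * ('I_n -> C))) :=
  [set R | exists K (Ls : 'I_n -> set C),
     [/\ KA K, forall i, LC (Ls i) & R = rectangle K Ls]].

Section rectangles_topology.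
Context {A C : topologicalType} {n : nat}.
Local Notation Y := (A * {ptws 'I_n -> C})%type.

Lemma clopen_rectangle {K : set A} {Ls : 'I_n -> set C} :
  clopen K -> (forall i, clopen (Ls i)) -> clopen (rectangle K Ls : set Y).
Proof.
move=> cK cLs.
have coord_cont i : continuous (fun p : Y => p.2 i).
  move=> p; apply: (@continuous_comp _ _ _ snd
      (fun g : {ptws 'I_n -> C} => g i)); first exact: cvg_snd.
  exact: (@proj_continuous _ (fun=> C) i).
have fst_cont : continuous (@fst A {ptws 'I_n -> C}).
  by move=> p; exact: cvg_fst.
have cK' := preimage_clopen cK fst_cont.
have cLs' i := preimage_clopen (cLs i) (coord_cont i).
split.
- rewrite openE => p [Kp Lp].
  have nK : nbhs p (fst @^-1` K).
    by apply: open_nbhs_nbhs; split => //; case: cK'.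
  have nL i : nbhs p ((fun q : Y => q.2 i) @^-1` Ls i).
    by apply: open_nbhs_nbhs; split => //; case: (cLs' i).
  by apply: filterS (filterI nK (filter_forall _ nL)) => q [Kq Lq]; split.
- have -> : rectangle K Ls = fst @^-1` K `&`
      \bigcap_(i in [set: 'I_n]) ((fun q : Y => q.2 i) @^-1` Ls i).
    apply/seteqP; split => q [Kq Lq]; split => // i.
      by move=> _; exact: Lq.
    exact: Lq.
  apply: closedI; first by case: cK'.
  by apply: closed_bigI => i _; case: (cLs' i).
Qed.

Lemma zero_dim_rectangle_nbhs {y : Y} {Q : set Y} :
  zero_dim A -> zero_dim C -> nbhs y Q ->
  exists K (Ls : 'I_n -> set C), [/\ clopen K, forall i, clopen (Ls i),
    rectangle K Ls y & rectangle K Ls `<=` Q].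
Proof.
move=> zA zC [[QA QC] /= [nQA nQC] QAC].
have [U [nU UQC]] := nbhs_ptws_box nQC.
have [K [cK Ky KQA]] := zA _ _ nQA.
have /choice [Ls HLs] :
    forall i, exists L, [/\ clopen L, L (y.2 i) & L `<=` U i].
  by move=> i; exact: zC _ _ (nU i).
exists K, Ls; split => //.
- by move=> i; case: (HLs i).
- by split => // i; case: (HLs i).
move=> p [Kp Lp]; apply: (QAC p); split; first exact: KQA.
by apply: UQC => i; case: (HLs i) => _ _; apply; exact: Lp.
Qed.

End rectangles_topology.

Lemma bool_gen_alg {T : Type} (G : set (set T)) : is_bool_alg (bool_gen G).
Proof.
split.
- by move=> C [].
- by move=> S GS C BC GC; case: (BC) => _ CC _; apply/CC/(GS _ BC GC).
- move=> S S' GS GS' C BC GC; case: (BC) => _ _ CU.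
  by apply: CU; [exact: GS BC GC | exact: GS' BC GC].
Qed.

Lemma bool_gen_sub {T : Type} {G : set (set T)} : G `<=` bool_gen G.
Proof. by move=> S GS C _; apply. Qed.

Lemma bool_alg0 {T : Type} {C : set (set T)} : is_bool_alg C -> C set0.
Proof. by case=> CT CC _; rewrite -setCT; exact: CC. Qed.

Lemma bool_gen_preimage {U V : Type} (f : U -> V) {G : set (set V)}
    {G' : set (set U)} :
  (forall R, G R -> bool_gen G' (f @^-1` R)) ->
  bool_gen G `<=` [set S | bool_gen G' (f @^-1` S)].
Proof.
move=> GG' S; apply => //; have [GT GC GU] := bool_gen_alg G'.
split => /=.
- by rewrite preimage_setT.
- by move=> S' GS'; rewrite preimage_setC; exact: GC.
- by move=> S1 S2 GS1 GS2; rewrite preimage_setU; exact: GU.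
Qed.

Definition clopen_preimages {U : Type} {V : topologicalType} (f : U -> V) :
    set (set U) :=
  [set L | exists2 K : set V, clopen K & L = f @^-1` K].

Lemma clopen_preimages_bool_alg {U : Type} {V : topologicalType} (f : U -> V) :
  is_bool_alg (clopen_preimages f).
Proof.
split.
- by exists setT; [exact: clopenT | rewrite preimage_setT].
- move=> _ [K cK ->]; exists (~` K); first exact: clopenC.
  by rewrite preimage_setC.
- move=> _ _ [K cK ->] [K' cK' ->]; exists (K `|` K'); first exact: clopenU.
  by rewrite preimage_setU.
Qed.

Lemma compact_bool_gen {Y : topologicalType} (G : set (set Y)) {S : set Y} :
  compact S -> (forall y, S y -> exists2 R, G R & nbhs y R /\ R `<=` S) ->
  bool_gen G S.
Proof.
move=> cS local.
pose D := [set R | bool_gen G R /\ R `<=` S].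
(* Compactness of [S], in the form of [near_covering], applied along the
   upward-directed family [D] finds a member of [D] covering [S]. *)
pose above := filter_from D (fun R => [set R' | D R' /\ R `<=` R']).
have above_filter : Filter above.
  apply: filter_from_filter.
    by exists set0; split => //; exact: bool_alg0 (bool_gen_alg G).
  move=> R1 R2 [GR1 R1S] [GR2 R2S]; exists (R1 `|` R2).
    split; last by move=> y [/R1S|/R2S].
    by case: (bool_gen_alg G) => _ _; apply.
  move=> R [DR R12]; split; split => //.
  - by apply: subset_trans R12; exact: subsetUl.
  - by apply: subset_trans R12; exact: subsetUr.
have := (compact_near_coveringP S).1 cS _ above (fun R y => R y) above_filter.
case.
- move=> y Sy; have [R GR [nR RS]] := local y Sy.
  exists (R, [set R' | D R' /\ R `<=` R']) => /=.
    by split => //; exists R => //; split => //; exact: bool_gen_sub.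
  by move=> [z R'] /= [Rz [_ RR']]; exact: RR'.
move=> R0 DR0 SR0; have [GR0 R0S] := DR0.
have S_R0 : S `<=` R0 by apply: (SR0 R0); split.
by rewrite (_ : S = R0) //; apply/seteqP.
Qed.

Lemma clopen_bool_gen_rectangles {A C : topologicalType} {n}
    {S : set (A * {ptws 'I_n -> C})} :
  stone_space A -> stone_space C -> clopen S ->
  bool_gen (rectangles n clopen clopen) S.
Proof.
move=> [cA _ zA] [cC _ zC] [oS clS].
have compactY : compact [set: A * {ptws 'I_n -> C}].
  rewrite -setXTT; apply: compact_setX => //.
  have := @tychonoff _ (fun _ : 'I_n => C) (fun _ => setT) (fun=> cC).
  by congr (compact _); rewrite eqEsubset.
apply: (@compact_bool_gen (A * {ptws 'I_n -> C})%type
  (rectangles n clopen clopen)).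
  exact: subclosed_compact clS compactY _.
move=> y Sy; have [K [Ls [cK cLs Ry RS]]] :=
  zero_dim_rectangle_nbhs zA zC (open_nbhs_nbhs (conj oS Sy)).
exists (rectangle K Ls); first by exists K, Ls.
split => //; apply: open_nbhs_nbhs; split => //.
by case: (clopen_rectangle cK cLs).
Qed.

Section term_eval_topology.
Context {Omega : nat -> topologicalType} {X A : topologicalType}.
Context {ev : op_type Omega A} {f : X -> A}.
Hypothesis ev_cont :
  forall n, continuous (fun p : Omega n * {ptws 'I_n -> A} => ev n p.1 p.2).
Hypothesis f_cont : continuous f.
Local Notation E := (term_eval ev f).

Lemma term_eval_box {t : term Omega X} {U : set A} : nbhs (E t) U ->
  exists2 N, term_box t N & N `<=` E @^-1` U.
Proof.
elim: t U => [x|n o ts IH] U nU.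
  have := f_cont x U nU; rewrite nbhsE => -[V [oV Vx] VU].
  exists [set s | exists2 y, V y & s = Var y]; first by exists V.
  by move=> _ [y /VU ? ->].
have [[W0 G] /= [nW0 nG] W0G] := ev_cont n (o, fun i => E (ts i)) U nU.
have [U' [nU' U'G]] := nbhs_ptws_box nG.
have /choice [Ns HNs] :
    forall i, exists N, term_box (ts i) N /\ N `<=` E @^-1` U' i.
  by move=> i; have [N ? ?] := IH i _ (nU' i); exists N.
move: nW0; rewrite nbhsE => -[W [oW Wo] WW0].
exists [set s | exists w g, [/\ s = Op n w g, W w & forall i, Ns i (g i)]].
  by exists W, Ns; split => // i; case: (HNs i).
move=> s [w [g [-> Ww Ng]]]; apply: (W0G (w, fun i => E (g i))).
split; first exact: WW0.
by apply: U'G => i; case: (HNs i) => _; apply; exact: Ng.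
Qed.

Lemma term_open_preimage {U : set A} : open U -> term_open (E @^-1` U).
Proof. by move=> oU t Ut; apply: term_eval_box; exact: open_nbhs_nbhs. Qed.

Lemma term_clopen_preimage {K : set A} : clopen K -> term_clopen (E @^-1` K).
Proof.
case=> oK cK; split; first exact: term_open_preimage.
by rewrite preimage_setC; apply: term_open_preimage; exact: closed_openC.
Qed.

End term_eval_topology.

Lemma term_open_Var {Omega : nat -> topologicalType} {X : topologicalType}
    {U : set (term Omega X)} :
  term_open U -> open [set x | U (Var x)].
Proof.
move=> oU; rewrite openE => x /oU [_ [V [oV Vx ->]] NU].
by apply: filterS (open_nbhs_nbhs (conj oV Vx)) => z Vz; apply: NU; exists z.
Qed.

Lemma cond_star_clopen_preimages (Omega : nat -> topologicalType)
    (X F : topologicalType) (evF : op_type Omega F) (iota : X -> F) :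
  stone_signature Omega -> stone_alg evF ->
  cond_star (clopen_preimages (term_eval evF iota)).
Proof.
move=> Omega_stone [F_stone evF_cont] n _ [K cK ->].
pose E := term_eval evF iota.
pose evalX (p : Omega n * ('I_n -> term Omega X)) :
  Omega n * {ptws 'I_n -> F} := (p.1, fun i => E (p.2 i)).
have -> : (fun p => term_ev p.1 p.2) @^-1` (E @^-1` K) =
    evalX @^-1` ((fun p => evF n p.1 p.2) @^-1` K) by [].
apply: (bool_gen_preimage evalX (G := rectangles n clopen clopen)); last first.
  exact: clopen_bool_gen_rectangles (Omega_stone n) F_stone
    (preimage_clopen cK (evF_cont n)).
move=> _ [K' [Ls [cK' cLs ->]]]; apply: bool_gen_sub.
by exists K', (fun i => E @^-1` Ls i); split => // i; exists (Ls i).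
Qed.

Section maximality.
Variables (Omega : nat -> topologicalType) (X : topologicalType).
Variable B : set (set (term Omega X)).
Hypotheses (B_clopen : clopen_bool_subalg B) (B_star : cond_star B).

Local Notation T := (term Omega X).
Local Notation Cube := {ptws set T -> bool}.

Definition profile (t : T) : Cube := fun L => `[< B L /\ L t >].

Definition profiles n (p : Omega n * ('I_n -> T)) :
    Omega n * {ptws 'I_n -> Cube} :=
  (p.1, fun i => profile (p.2 i)).

Lemma rectangle_profiles n (K : set (Omega n)) (Ls : 'I_n -> set T) :
  (forall i, B (Ls i)) ->
  rectangle K Ls =
    profiles n @^-1` rectangle K (fun i (u : Cube) => u (Ls i)).
Proof.
move=> BLs; apply/seteqP; split => p [Kp Lp]; split => // i.
  by apply/asboolP; split; [exact: BLs | exact: Lp].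
by have /asboolP [] := Lp i.
Qed.

Lemma bool_gen_rectangles_profiles n :
  bool_gen (rectangles n clopen B) `<=` clopen_preimages (profiles n).
Proof.
move=> S; apply; first exact: clopen_preimages_bool_alg.
move=> _ [K [Ls [cK BLs ->]]].
exists (rectangle K (fun i (u : Cube) => u (Ls i))).
  by apply: clopen_rectangle => // i; exact: clopen_ptws_bool_coord.
exact: rectangle_profiles.
Qed.

Lemma Op_clopen_preimage n (L : set T) :
  exists2 C : set (Omega n * {ptws 'I_n -> Cube}), clopen C &
    [set p | B L /\ L (Op n p.1 p.2)] = profiles n @^-1` C.
Proof.
have [BL|nBL] := pselect (B L); last first.
  by exists set0; [exact: clopen0 | apply/seteqP; split => // p []].
have [C cC LC] := bool_gen_rectangles_profiles n _ (B_star n L BL).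
by exists C => //; rewrite -LC; apply/seteqP; split => p //= [].
Qed.

Let op_clopen n L := s2val (cid2 (Op_clopen_preimage n L)).

Definition op_profile : op_type Omega Cube :=
  fun n o a L => `[< op_clopen n L (o, a) >].

Lemma op_profileE n o (ts : 'I_n -> T) :
  op_profile n o (fun i => profile (ts i)) = profile (Op n o ts).
Proof.
apply/funext => L; rewrite /op_profile /profile.
have := s2valP' (cid2 (Op_clopen_preimage n L)).
by move=> /(congr1 (@^~ (o, ts))) /= ->.
Qed.

Lemma stone_alg_op_profile : stone_alg op_profile.
Proof.
split; first exact: stone_space_bool_ptws.
move=> n; apply: continuous_ptws => L.
have -> : (fun p : Omega n * {ptws 'I_n -> Cube} => op_profile n p.1 p.2 L) =
    (fun p => `[< op_clopen n L p >]) by apply/funext => -[].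
exact/clopen_asbool_continuous/(s2valP (cid2 (Op_clopen_preimage n L))).
Qed.

Lemma continuous_profile_Var : continuous (fun x : X => profile (Var x)).
Proof.
apply: continuous_ptws => L.
apply: (@clopen_asbool_continuous _ [set x | B L /\ L (Var x)]).
have [BL|nBL] := pselect (B L); last first.
  rewrite (_ : [set x | _] = set0); first exact: clopen0.
  by apply/seteqP; split => // x [].
rewrite (_ : [set x | _] = [set x | L (Var x)]); last first.
  by apply/seteqP; split => x //= [].
have [Lo Lc] := B_clopen.2 L BL.
split; first exact: term_open_Var.
by rewrite -[X in closed X]setCK; apply: open_closedC; exact: term_open_Var Lc.
Qed.

Lemma cond_star_maximal (F : topologicalType) (evF : op_type Omega F)
    (iota : X -> F) :
  is_free_stone_alg evF iota -> B `<=` clopen_preimages (term_eval evF iota).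
Proof.
move=> [_ _ _ free] L BL.
have [g [[g_cont g_hom g_iota] _]] :=
  free _ _ stone_alg_op_profile _ continuous_profile_Var.
have g_eval t : g (term_eval evF iota t) = profile t.
  elim: t => [x|n o ts IH] /=; first exact: g_iota.
  by rewrite g_hom -op_profileE; congr op_profile; apply/funext => i; exact: IH.
exists (g @^-1` [set u : Cube | u L]).
  exact: preimage_clopen (clopen_ptws_bool_coord L) g_cont.
apply/seteqP; split => t /=; rewrite g_eval /profile.
  by move=> Lt; apply/asboolP.
by case/asboolP.
Qed.

End maximality.

Theorem corollary5p9 (Omega : nat -> topologicalType) (X : topologicalType)
    (F : topologicalType) (evF : op_type Omega F) (iota : X -> F) :
  stone_signature Omega ->
  is_free_stone_alg evF iota ->
  let B0 : set (set (term Omega X)) :=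
    [set L | exists2 K : set F, clopen K & L = term_eval evF iota @^-1` K] in
  [/\ clopen_bool_subalg B0, cond_star B0 &
      forall B : set (set (term Omega X)),
        clopen_bool_subalg B -> cond_star B -> B `<=` B0].
Proof.
move=> Omega_stone free B0; have [F_stone iota_cont _ _] := free.
split.
- split; first exact: clopen_preimages_bool_alg.
  by move=> _ [K cK ->]; exact: (term_clopen_preimage F_stone.2 iota_cont cK).
- exact: cond_star_clopen_preimages.
- by move=> B B_clopen B_star; exact: cond_star_maximal.
Qed.
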